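(* Let $n,k$ be integers with $1<k<n-1$, let $\mathcal{P}_{k,n}=\{x\in[0,1]^n:\sum_{i=1}^nx_i=k\}$, let $\mathcal{F}$ be a strong Bernoulli factory for $\mathcal{P}_{k,n}$, and let $v$ be a vertex of $\mathcal{P}_{k,n}$. Then for every $T\ge0$ the polynomial $P_{v,T}(x)$ is divisible by $\prod_{i:v_i=1}x_i\prod_{i:v_i=0}(1-x_i)$.
   Context: A Bernoulli factory with output set $V$ (for inputs $x\in[0,1]^n$) is a (possibly infinite) rooted binary tree whose internal nodes are labeled by an index $i\in[n]$ or a known constant $c\in(0,1)$ and whose leaves are labeled by elements of $V$; on input $x$ one walks from the root, at a node labeled $i$ flipping a fresh independent coin that is $1$ with probability $x_i$, at a node labeled $c$ a fresh coin of bias $c$, following the edge labeled by the outcome, and outputs the label of the leaf reached; $\mathcal{F}(x)$ is the output and $T_{\mathcal{F}}(x)$ the depth of the leaf reached. For a polytope $\mathcal{P}$ with vertex set $V$, a strong Bernoulli factory for $\mathcal{P}$ is such a factory with output set $V$ that terminates almost surely and satisfies $\mathbb{E}[\mathcal{F}(x)]=x$ for all $x\in\mathcal{P}$. $P_{v,T}(x)=\Pr[\mathcal{F}(x)=v\wedge T_{\mathcal{F}}(x)\le T]$, regarded as the polynomial equal to the sum, over leaves labeled $v$ at depth at most $T$, of the product of the transition probabilities along the root-to-leaf path (each such product has the form $c\prod_ix_i^{a_i}(1-x_i)^{b_i}$ with $c\ge0$). *)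

From mathcomp Require Import all_boot all_order all_algebra.
From mathcomp Require Import reals.
From mathcomp Require Import mpoly.
Set Implicit Arguments. Unset Strict Implicit. Unset Printing Implicit Defensive.
Import Order.TTheory GRing.Theory Num.Theory.
Local Open Scope ring_scope.

Definition hypersimplex (R : realType) (n k : nat) (x : 'rV[R]_n) : Prop :=
  (forall i : 'I_n, 0 <= x 0 i <= 1) /\ \sum_(i < n) x 0 i = k%:R.

Arguments hypersimplex {R} n k x.

Definition is_vertex (R : realType) (n : nat) (P : 'rV[R]_n -> Prop)
    (v : 'rV[R]_n) : Prop :=
  P v /\ forall (y z : 'rV[R]_n) (t : R), P y -> P z -> 0 < t < 1 ->
    v = t *: y + (1 - t) *: z -> y = z.

(* Node labels of a Bernoulli factory tree: a leaf with an output,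
   a coin of the unknown bias x_i, or a coin of known constant bias c. *)
Inductive node (R : Type) (n : nat) :=
| Leaf of 'rV[R]_n
| Flip of 'I_n
| Const of R.

(* A (possibly infinite) rooted binary tree: the node reached by the finite
   sequence of coin outcomes s (from the root [::]; true = outcome 1). Only
   positions all of whose proper prefixes are internal nodes belong to the tree. *)
Definition factory (R : Type) (n : nat) := seq bool -> node R n.

Definition is_leaf (R : Type) (n : nat) (a : node R n) : bool :=
  if a is Leaf _ then true else false.

Definition reached (R : Type) (n : nat) (F : factory R n) (s : seq bool) : bool :=
  all (fun j => ~~ is_leaf (F (take j s))) (iota 0 (size s)).

Definition edge_poly (R : realType) (n : nat) (a : node R n) (b : bool)
    : {mpoly R[n]} :=
  match a with
  | Flip i => if b then 'X_i else 1 - 'X_i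
  | Const c => if b then c%:MP else (1 - c)%:MP
  | Leaf _ => 0
  end.

Definition path_poly (R : realType) (n : nat) (F : factory R n) (s : seq bool)
    : {mpoly R[n]} :=
  \prod_(j < size s) edge_poly (F (take j s)) (nth false s j).

Definition leafsum (R : realType) (n : nat) (F : factory R n)
    (g : 'rV[R]_n -> R) (T : nat) : {mpoly R[n]} :=
  \sum_(t < T.+1) \sum_(s : t.-tuple bool)
     (if F s is Leaf w then (if reached F s then g w else 0) else 0)
       *: path_poly F s.

Definition P_vT (R : realType) (n : nat) (F : factory R n) (v : 'rV[R]_n)
    (T : nat) : {mpoly R[n]} :=
  leafsum F (fun w => (w == v)%:R) T.

Definition converges_to (R : realType) (u : nat -> R) (l : R) : Prop :=
  forall e : R, 0 < e -> exists N : nat, forall T : nat, (N <= T)%N ->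
    `|u T - l| < e.

(* A strong Bernoulli factory for the polytope P: constants lie in (0,1),
   leaves are labelled by vertices of P, and for every x in P the walk
   terminates almost surely (Pr[T_F(x) <= T] -> 1) and E[F(x)] = x
   (coordinatewise, E[F(x)_i] = lim_T sum over leaves at depth <= T). *)
Definition strong_factory (R : realType) (n : nat) (P : 'rV[R]_n -> Prop)
    (F : factory R n) : Prop :=
  (forall s : seq bool, reached F s ->
     match F s with
     | Const c => 0 < c < 1
     | Leaf w => is_vertex P w
     | Flip _ => True
     end) /\
  forall x : 'rV[R]_n, P x ->
    converges_to (fun T => (leafsum F (fun _ => 1) T).@[fun j => x 0 j]) 1 /\
    forall i : 'I_n,
      converges_to (fun T => (leafsum F (fun w => w 0 i) T).@[fun j => x 0 j])
                   (x 0 i).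

From mathcomp Require Import all_boot all_order all_algebra.
From mathcomp Require Import reals.
From mathcomp Require Import mpoly.
From mathcomp Require Import ring lra.
Import Order.TTheory GRing.Theory Num.Theory.
Set Implicit Arguments. Unset Strict Implicit. Unset Printing Implicit Defensive.
Local Open Scope ring_scope.

(* Fix a leaf labelled v, reached along the coin outcomes s, and a coordinate i
   with v_i in {0, 1}.  Let x be the point of P_{k,n} with x_i = 1 - v_i and all
   other coordinates equal to (k - x_i) / (n - 1), which lie in (0, 1) because
   1 < k < n - 1.  At x the i-th coordinate of the output lies in [0, 1] and has
   mean x_i, so the output agrees with v in coordinate i with probability 0; hence
   the path probability of s vanishes at x.  The only transitions that vanish at x
   are flips of coin i with outcome v_i, so s contains one.  Different coordinates
   give different positions of s, so the product of the corresponding factors x_i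
   or 1 - x_i divides the path polynomial of s, hence every P_{v,T}. *)

Section Divides.
Variable A : comPzRingType.

Definition divides (d p : A) : Prop := exists q, p = q * d.

Lemma divides0 d : divides d 0.
Proof. by exists 0; rewrite mul0r. Qed.

Lemma dividesD d p1 p2 : divides d p1 -> divides d p2 -> divides d (p1 + p2).
Proof. by move=> [q1 ->] [q2 ->]; exists (q1 + q2); rewrite mulrDl. Qed.

Lemma divides_sum (I : Type) (r : seq I) (P : pred I) (f : I -> A) d :
  (forall i, P i -> divides d (f i)) -> divides d (\sum_(i <- r | P i) f i).
Proof. by move=> Hf; apply: big_ind => //; [apply: divides0 | apply: dividesD]. Qed.

End Divides.

Lemma dividesZ (R : comNzRingType) (A : comAlgType R) (c : R) (d p : A) :
  divides d p -> divides d (c *: p).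
Proof. by move=> [q ->]; exists (c *: q); rewrite scalerAl. Qed.

Lemma converges_toB (R : realType) (u w : nat -> R) a b :
  converges_to u a -> converges_to w b -> converges_to (fun T => u T - w T) (a - b).
Proof.
move=> Hu Hw e e_gt0.
have e2_gt0 : 0 < e / 2 by rewrite divr_gt0.
have [[Nu HNu] [Nw HNw]] := (Hu _ e2_gt0, Hw _ e2_gt0).
exists (maxn Nu Nw) => T; rewrite geq_max => /andP[/HNu hu /HNw hw].
have -> : u T - w T - (a - b) = (u T - a) - (w T - b) by ring.
by rewrite (splitr e); apply: le_lt_trans (ler_normB _ _) _; apply: ltrD.
Qed.

Lemma nondecreasing_converges_to_ub (R : realType) (u : nat -> R) l :
  (forall T, u T <= u T.+1) -> converges_to u l -> forall T, u T <= l.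
Proof.
move=> u_nd u_cvg T; rewrite leNgt; apply/negP => lt_l_uT.
have [N HN] : exists N, forall T', (N <= T')%N -> `|u T' - l| < u T - l.
  by apply: u_cvg; rewrite subr_gt0.
have := HN (maxn N T) (leq_maxl _ _).
have le_uT : u T <= u (maxn N T).
  by apply: (homo_leq le_refl le_trans u_nd); apply: leq_maxr.
by rewrite ltNge (le_trans (lerB le_uT (lexx l)) (ler_norm _)).
Qed.

Definition well_labelled (R : realType) (n : nat) (P : 'rV[R]_n -> Prop)
    (F : factory R n) : Prop :=
  forall s : seq bool, reached F s ->
    match F s with
    | Const c => 0 < c < 1
    | Leaf w => is_vertex P w
    | Flip _ => True
    end.

Section Factory.
Variables (R : realType) (n : nat) (F : factory R n).

Lemma reached_internal s (j : nat) :
  reached F s -> (j < size s)%N -> ~~ is_leaf (F (take j s)).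
Proof. by move=> /allP s_reached j_lt; apply: s_reached; rewrite mem_iota. Qed.

Lemma reached_take s (j : nat) : reached F s -> reached F (take j s).
Proof.
move=> s_reached; apply/allP => j'; rewrite mem_iota add0n size_take_min.
rewrite leq_min => /andP[_ /andP[j'_j j'_s]].
by rewrite -take_min (minn_idPl (ltnW j'_j)) reached_internal.
Qed.

Definition leaf_weight (g : 'rV[R]_n -> R) (s : seq bool) : R :=
  if F s is Leaf w then (if reached F s then g w else 0) else 0.

Lemma leafsumE g T : leafsum F g T =
  \sum_(t < T.+1) \sum_(s : t.-tuple bool) leaf_weight g s *: path_poly F s.
Proof. by []. Qed.

Lemma leafsumB g1 g2 T :
  leafsum F (fun w => g1 w - g2 w) T = leafsum F g1 T - leafsum F g2 T.
Proof.
rewrite !leafsumE -sumrB; apply: eq_bigr => t _; rewrite -sumrB.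
apply: eq_bigr => s _; rewrite -scalerBl /leaf_weight.
by case: (F s) => [w|*|*]; rewrite ?subr0 //; case: reached; rewrite ?subr0.
Qed.

Definition edge_prob (x : 'I_n -> R) (a : node R n) (b : bool) : R :=
  match a with
  | Flip i => if b then x i else 1 - x i
  | Const c => if b then c else 1 - c
  | Leaf _ => 0
  end.

Lemma meval_path_poly x s : (path_poly F s).@[x] =
  \prod_(j < size s) edge_prob x (F (take j s)) (nth false s j).
Proof.
rewrite rmorph_prod; apply: eq_bigr => j _.
case: (F _) => [w|i|c] /=; first exact: meval0.
- by case: nth; rewrite ?mevalB ?meval1 mevalXU.
- by case: nth; rewrite mevalC.
Qed.

Lemma meval_leafsum g T x : (leafsum F g T).@[x] =
  \sum_(t < T.+1) \sum_(s : t.-tuple bool) leaf_weight g s * (path_poly F s).@[x].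
Proof.
rewrite leafsumE raddf_sum; apply: eq_bigr => t _.
by rewrite raddf_sum; apply: eq_bigr => s _; apply: mevalZ.
Qed.

Section NonNegative.
Variables (P : 'rV[R]_n -> Prop) (x : 'I_n -> R) (g : 'rV[R]_n -> R).
Hypotheses (F_labelled : well_labelled P F) (x_cube : forall i, 0 <= x i <= 1)
  (g_ge0 : forall w, P w -> 0 <= g w).

Lemma path_poly_meval_ge0 s : reached F s -> 0 <= (path_poly F s).@[x].
Proof.
move=> s_reached; rewrite meval_path_poly; apply: prodr_ge0 => j _.
have := F_labelled (reached_take j s_reached).
have := reached_internal s_reached (ltn_ord j).
case: (F _) => [w|i|c] //= _ => [_|/andP[c_gt0 c_lt1]].
- by have /andP[] := x_cube i; case: nth; lra.
- by case: nth; lra.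
Qed.

Lemma leaf_term_ge0 s : 0 <= leaf_weight g s * (path_poly F s).@[x].
Proof.
rewrite /leaf_weight; case s_reached: (reached F s); last first.
  by case: (F s) => *; rewrite mul0r.
have := F_labelled s_reached; case: (F s) => [w [Pw _]|_ _|_ _]; rewrite ?mul0r //.
by rewrite mulr_ge0 ?g_ge0 ?path_poly_meval_ge0.
Qed.

Lemma meval_leafsum_nondecreasing T :
  (leafsum F g T).@[x] <= (leafsum F g T.+1).@[x].
Proof.
rewrite !meval_leafsum [leRHS]big_ord_recr /= lerDl.
by apply: sumr_ge0 => s _; apply: leaf_term_ge0.
Qed.

Lemma leaf_term_le_meval_leafsum s :
  leaf_weight g s * (path_poly F s).@[x] <= (leafsum F g (size s)).@[x].
Proof.
rewrite meval_leafsum (bigD1 ord_max) //= (bigD1 (in_tuple s)) //= -addrA lerDl.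
by apply: addr_ge0; do !apply: sumr_ge0 => * //; apply: leaf_term_ge0.
Qed.

Lemma leaf_path_meval_eq0 s w :
  converges_to (fun T => (leafsum F g T).@[x]) 0 ->
  reached F s -> F s = Leaf w -> 0 < g w -> (path_poly F s).@[x] = 0.
Proof.
move=> g_cvg0 s_reached F_s gw_gt0.
have term_le0 : g w * (path_poly F s).@[x] <= 0.
  have := leaf_term_le_meval_leafsum s; rewrite /leaf_weight F_s s_reached.
  move/le_trans; apply.
  exact: nondecreasing_converges_to_ub meval_leafsum_nondecreasing g_cvg0 _.
apply/eqP; rewrite eq_le -(pmulr_rle0 _ gw_gt0) term_le0.
exact: path_poly_meval_ge0.
Qed.

End NonNegative.

Lemma path_poly_meval_eq0_flip (P : 'rV[R]_n -> Prop) (x : 'I_n -> R) i s :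
  well_labelled P F -> reached F s ->
  (forall j, j != i -> 0 < x j < 1) -> (x i == 0) || (x i == 1) ->
  (path_poly F s).@[x] = 0 ->
  exists j : 'I_(size s), F (take j s) = Flip R i /\ nth false s j = (x i == 0).
Proof.
move=> F_labelled s_reached x_int x_i01 /eqP.
rewrite meval_path_poly => /prodf_eq0[j _ edge_eq0]; exists j.
move: edge_eq0 (F_labelled _ (reached_take j s_reached)).
case: (F _) (reached_internal s_reached (ltn_ord j)) => [w|i'|c] //= _.
- case: (eqVneq i' i) => [->|i'_neq_i] /eqP edge_eq0 _.
    by split=> //; move: x_i01 edge_eq0; case: nth; case: eqP => //= ->; lra.
  by exfalso; have := x_int i' i'_neq_i; case: nth edge_eq0; lra.
- by case: nth => /= /eqP edge_eq0 /andP[c_gt0 c_lt1]; exfalso; lra.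
Qed.

Lemma path_poly_divides_flips (A : {pred 'I_n}) (b : 'I_n -> bool) s :
  (forall i, i \in A -> exists j : 'I_(size s),
     F (take j s) = Flip R i /\ nth false s j = b i) ->
  divides (\prod_(i in A) (if b i then 'X_i else 1 - 'X_i)) (path_poly F s).
Proof.
move=> A_flips; case: (pickP (mem A)) => [i0 i0A | A0]; last first.
  by exists (path_poly F s); rewrite big_pred0 ?mulr1.
have [j0 _] := A_flips i0 i0A.
have /fin_all_exists[f f_flips] : forall i, exists j : 'I_(size s), i \in A ->
    F (take j s) = Flip R i /\ nth false s j = b i.
  move=> i; case: (boolP (i \in A)) => [/A_flips[j Hj] | _]; first by exists j.
  by exists j0.
have f_inj : {in A &, injective f}.
  move=> i1 i2 /f_flips[F_i1 _] /f_flips[F_i2 _] f12.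
  by move: F_i1; rewrite f12 F_i2 => -[].
exists (\prod_(j < size s | j \notin f @: A) edge_poly (F (take j s)) (nth false s j)).
rewrite /path_poly (bigID (mem (f @: A))) /= mulrC; congr (_ * _).
by rewrite big_imset //=; apply: eq_bigr => i /f_flips[-> ->].
Qed.

Lemma leafsum_divides d g T :
  (forall s w, reached F s -> F s = Leaf w -> g w != 0 -> divides d (path_poly F s)) ->
  divides d (leafsum F g T).
Proof.
move=> leaf_divides; rewrite leafsumE.
apply: divides_sum => t _; apply: divides_sum => s _; rewrite /leaf_weight.
case s_reached: (reached F s); last by case: (F s) => *; rewrite scale0r; apply: divides0.
case F_s: (F s) => [w|i|c]; try by rewrite scale0r; apply: divides0.
have [-> | gw_neq0] := eqVneq (g w) 0; first by rewrite scale0r; apply: divides0.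
exact/dividesZ/(leaf_divides s w).
Qed.

End Factory.

Lemma strong_factory_compl_cvg (R : realType) (n : nat) (P : 'rV[R]_n -> Prop)
    (F : factory R n) (x : 'rV[R]_n) (i : 'I_n) :
  strong_factory P F -> P x ->
  converges_to (fun T => (leafsum F (fun w => 1 - w 0 i) T).@[fun j => x 0 j])
               (1 - x 0 i).
Proof.
move=> [_ F_cvg] Px e e_gt0; have [cvg1 cvg_i] := F_cvg x Px.
have [N HN] := converges_toB cvg1 (cvg_i i) e_gt0.
by exists N => T /HN; rewrite leafsumB mevalB.
Qed.

Lemma prod_factor_splitE (R : comNzRingType) (n : nat) (u : 'I_n -> R) :
  \prod_(i | u i == 1) 'X_i * \prod_(i | u i == 0) (1 - 'X_i) =
  \prod_(i in [pred i | (u i == 1) || (u i == 0)])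
     (if u i == 1 then 'X_i else 1 - 'X_i) :> {mpoly R[n]}.
Proof.
rewrite [RHS](bigID (fun i => u i == 1)) /=; congr (_ * _); apply: eq_big => i.
- by rewrite unfold_in /=; case: (u i == 1); rewrite ?andbF.
- by move=> ->.
- rewrite unfold_in /=; case: eqP => [->|_]; rewrite ?orbT ?orbF ?andbN //.
  by rewrite eq_sym oner_eq0.
- by move=> /eqP->; rewrite eq_sym oner_eq0.
Qed.

Section Hypersimplex.
Variables (R : realType) (n k : nat).
Hypotheses (k_gt1 : (1 < k)%N) (k_lt : (k < n.-1)%N).

Definition hypersimplex_point (i : 'I_n) (a : R) : 'rV[R]_n :=
  \row_j (if j == i then a else (k%:R - a) / n.-1%:R).

Lemma hypersimplex_point_interior i a j : 0 <= a <= 1 -> j != i ->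
  0 < hypersimplex_point i a 0 j < 1.
Proof.
move=> /andP[a_ge0 a_le1] /negbTE j_neq_i; rewrite mxE j_neq_i.
have k_gt1R : 1 < k%:R :> R by rewrite ltr1n.
have k_ltR : k%:R < n.-1%:R :> R by rewrite ltr_nat.
by rewrite divr_gt0 ?ltr_pdivrMr /=; lra.
Qed.

Lemma hypersimplex_pointP i a : 0 <= a <= 1 ->
  hypersimplex n k (hypersimplex_point i a).
Proof.
move=> a01; split=> [j|].
  case: (eqVneq j i) => [->|j_neq_i]; first by rewrite mxE eqxx.
  by have /andP[/ltW -> /ltW ->] := hypersimplex_point_interior a01 j_neq_i.
rewrite (bigD1 i) //= mxE eqxx (eq_bigr (fun=> (k%:R - a) / n.-1%:R)); last first.
  by move=> j /negbTE j_neq_i; rewrite mxE j_neq_i.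
rewrite sumr_const cardC1 card_ord -[_ *+ n.-1]mulr_natr divfK; first by ring.
by rewrite pnatr_eq0 -lt0n (ltn_trans (ltnW k_gt1) k_lt).
Qed.

Lemma hypersimplex_leaf_flips (F : factory R n) (v : 'rV[R]_n) s i :
  strong_factory (hypersimplex n k) F -> reached F s -> F s = Leaf v ->
  (v 0 i == 1) || (v 0 i == 0) ->
  exists j : 'I_(size s), F (take j s) = Flip R i /\ nth false s j = (v 0 i == 1).
Proof.
move=> F_strong s_reached F_s v_i01; have [F_labelled F_cvg] := F_strong.
have a01 : 0 <= 1 - v 0 i <= 1.
  by case/orP: v_i01 => /eqP ->; rewrite ?subrr ?subr0 lexx ler01.
set x := hypersimplex_point i (1 - v 0 i).
have Px : hypersimplex n k x := hypersimplex_pointP i a01.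
have x_i : x 0 i = 1 - v 0 i by rewrite mxE eqxx.
have x_cube : forall j, 0 <= x 0 j <= 1 by case: Px.
have path_eq0 : (path_poly F s).@[fun j => x 0 j] = 0.
  case/orP: v_i01 => /eqP v_i.
  - apply: (leaf_path_meval_eq0 (g := fun w => w 0 i) F_labelled x_cube _ _
              s_reached F_s).
    + by move=> w [w_cube _]; case/andP: (w_cube i).
    + by have := (F_cvg x Px).2 i; rewrite x_i v_i subrr.
    + by rewrite v_i ltr01.
  - apply: (leaf_path_meval_eq0 (g := fun w => 1 - w 0 i) F_labelled x_cube _ _
              s_reached F_s).
    + by move=> w [w_cube _]; case/andP: (w_cube i) => _; rewrite subr_ge0.
    + by have := strong_factory_compl_cvg i F_strong Px; rewrite x_i v_i !subr0 subrr.
    + by rewrite v_i subr0 ltr01.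
have x_i01 : (x 0 i == 0) || (x 0 i == 1).
  by rewrite x_i; case/orP: v_i01 => /eqP ->; rewrite ?subrr ?subr0 eqxx ?orbT.
have [j [F_j nth_j]] := path_poly_meval_eq0_flip F_labelled s_reached
  (fun j => hypersimplex_point_interior a01) x_i01 path_eq0.
by exists j; rewrite F_j nth_j x_i subr_eq0 eq_sym.
Qed.

End Hypersimplex.

Theorem lemma7p4 (R : realType) (n k : nat) (F : factory R n) (v : 'rV[R]_n) :
  (1 < k)%N -> (k < n.-1)%N ->
  strong_factory (hypersimplex n k) F ->
  is_vertex (hypersimplex n k) v ->
  forall T : nat, exists q : {mpoly R[n]},
    P_vT F v T =
      q * ((\prod_(i < n | v 0 i == 1) 'X_i) *
           (\prod_(i < n | v 0 i == 0) (1 - 'X_i))).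
Proof.
move=> k_gt1 k_lt F_strong _ T; rewrite prod_factor_splitE.
apply: leafsum_divides => s w s_reached F_s.
rewrite pnatr_eq0 eqb0 negbK => /eqP w_eq_v; rewrite w_eq_v in F_s.
apply: path_poly_divides_flips => i; rewrite unfold_in => v_i01.
exact: (hypersimplex_leaf_flips k_gt1 k_lt F_strong s_reached F_s).
Qed.
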